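(* Let $\hat\lambda\in\mathbb{R}$ and $\lambda\in\mathbb{R}\cup\{+\infty\}$ satisfy $0\le\hat\lambda\le1$, $\tfrac12<\lambda\le+\infty$ and $\hat\lambda^2/(1-\hat\lambda)\le\lambda$. Then there exist $q_0\ge0$ and a $3$-system $\mathbf{P}=(P_1,P_2,P_3)$ on $[q_0,+\infty)$ such that $\lim_{q\to\infty}P_1(q)=+\infty$, $\overline{\varphi}(P_3)=\lambda/(1+\lambda)$ (interpreted as $1$ when $\lambda=+\infty$) and $\kappa(P_3)=\hat\lambda/(1+\hat\lambda)$.
   Context: A $3$-system on $[q_0,+\infty)$ is a continuous piecewise linear map $\mathbf{P}=(P_1,P_2,P_3):[q_0,+\infty)\to\mathbb{R}^3$ such that: (1) for each $q\ge q_0$, $0\le P_1(q)\le P_2(q)\le P_3(q)$ and $P_1(q)+P_2(q)+P_3(q)=q$; (2) on each non-empty open subinterval where $\mathbf{P}$ is differentiable, there is $r\in\{1,2,3\}$ such that $P_r$ has slope $1$ and the other components are constant; (3) if $q>q_0$ is a point where $\mathbf{P}$ is not differentiable and $P_r$ has slope $1$ just to the left of $q$ and $P_s$ has slope $1$ just to the right, with $r<s$, then $P_r(q)=P_{r+1}(q)=\cdots=P_s(q)$. For an unbounded continuous piecewise linear $P$ with slopes $0,1$ changing from slope $1$ to $0$ infinitely often: $(q_i)$ is the increasing sequence of abscissas where the slope changes from $1$ to $0$; $\overline{\varphi}(P)=\limsup_{q\to\infty}P(q)/q$; for $\alpha<\overline\varphi(P)$, $(q_{i,\alpha})_i$ is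 the increasing subsequence of the $q_k$ with $P(q_k)/q_k\ge\alpha$, $r_{i,\alpha}=q_{i+1,\alpha}-P(q_{i+1,\alpha})+P(q_{i,\alpha})$, $\kappa_\alpha(P)=\liminf_i P(q_{i,\alpha})/r_{i,\alpha}$, and $\kappa(P)=\lim_{\alpha\to\overline\varphi(P)^-}\kappa_\alpha(P)$. *)

From Stdlib Require Import Reals Lra.
Open Scope R_scope.

(** A 3-system on [q0,+oo): components P 1, P 2, P 3 (other indices unused).
    Continuous piecewise linear: there are breakpoints q0 = t 0 < t 1 < ...
    tending to +oo such that on each [t n, t (S n)] the component P (r n)
    has slope 1 and the others are constant (conditions (2)); (1) the
    ordering/sum condition; (3) the condition at the breakpoints. *)
Definition is_3system (q0 : R) (P : nat -> R -> R) : Prop :=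
  exists (t : nat -> R) (r : nat -> nat),
    t 0%nat = q0 /\
    (forall n, t n < t (S n)) /\
    (forall M, exists n, M < t n) /\
    (forall n, (1 <= r n <= 3)%nat) /\
    (forall n k q, (1 <= k <= 3)%nat -> t n <= q <= t (S n) ->
       P k q = P k (t n) + (if Nat.eqb k (r n) then q - t n else 0)) /\
    (forall q, q0 <= q ->
       0 <= P 1%nat q /\ P 1%nat q <= P 2%nat q /\ P 2%nat q <= P 3%nat q /\
       P 1%nat q + P 2%nat q + P 3%nat q = q) /\
    (forall n, (r n < r (S n))%nat ->
       forall k, (r n <= k <= r (S n))%nat ->
       P k (t (S n)) = P (r n) (t (S n))).

Definition slope_1_to_0 (q0 : R) (P : R -> R) (q : R) : Prop :=
  q0 < q /\ exists eps, 0 < eps /\ q0 <= q - eps /\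
    (forall x, q - eps <= x <= q -> P x = P q - (q - x)) /\
    (forall x, q <= x <= q + eps -> P x = P q).

Definition enumerates (A : R -> Prop) (e : nat -> R) : Prop :=
  (forall i, e i < e (S i)) /\ (forall i, A (e i)) /\
  (forall q, A q -> exists i, e i = q).

Definition is_limsup_infty (f : R -> R) (L : R) : Prop :=
  forall eps, 0 < eps ->
    (exists M, forall q, M <= q -> f q < L + eps) /\
    (forall M, exists q, M <= q /\ L - eps < f q).

Definition is_liminf_seq (u : nat -> R) (L : R) : Prop :=
  forall eps, 0 < eps ->
    (exists N, forall n, (N <= n)%nat -> L - eps < u n) /\
    (forall N, exists n, (N <= n)%nat /\ u n < L + eps).

Definition phibar_is (P : R -> R) (L : R) : Prop :=
  is_limsup_infty (fun q => P q / q) L.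

Definition kappa_alpha_is (q0 : R) (P : R -> R) (alpha L : R) : Prop :=
  exists e : nat -> R,
    enumerates (fun q => slope_1_to_0 q0 P q /\ alpha <= P q / q) e /\
    is_liminf_seq
      (fun i => P (e i) / (e (S i) - P (e (S i)) + P (e i))) L.

Definition kappa_is (q0 : R) (P : R -> R) (c : R) : Prop :=
  (exists e, enumerates (slope_1_to_0 q0 P) e) /\
  exists phi, phibar_is P phi /\
    forall eps, 0 < eps -> exists delta, 0 < delta /\
      forall alpha, phi - delta < alpha < phi ->
        exists L, kappa_alpha_is q0 P alpha L /\ Rabs (L - c) < eps.

(** lambda in R u {+oo}: None stands for +oo. *)
Definition lam_frac (lam : option R) : R :=
  match lam with Some l => l / (1 + l) | None => 1 end.

Definition lam_hyp (lh : R) (lam : option R) : Prop :=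
  match lam with
  | Some l => 1/2 < l /\ lh < 1 /\ lh ^ 2 / (1 - lh) <= l
  | None => True
  end.

(** Both 3-systems interpolate a periodic sequence of states in which [P_3] is raised
    once per period, after [P_1] and [P_2] have caught up with it. Hence [P_3] is a
    staircase, it changes slope from 1 to 0 exactly where its flat steps start, [P_3 (q) / q]
    peaks at these points, and [phibar] and [kappa] are read off from the step heights.

    For [lh <= 1/2] a period takes [(D n, D n, D (S n))] to [(D (S n), D (S n), D (S (S n)))],
    and [P_3 (q) / q = rho / (2 + rho)] where the step of ratio [rho = D (S n) / D n] starts.
    The steps with a large ratio realize [phibar]; between two of them lie [k] steps of ratio
    [h], which gives [kappa = 1 / (2 h ^ k + 1)]: this is [lh / (1 + lh)] for [h ^ k = 1 / (2 lh)],
    and tends to [0] if [k] grows.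

    For [lh > 1/2] every step counts: [P_1] restarts at [u] times the previous height [D] of
    [P_3] and [P_2] at [D], which gives [kappa = 1 / (u + 2)] with [u -> 1 / lh - 1]. The
    hypothesis [lh ^ 2 / (1 - lh) <= lambda] is what keeps the new value of [P_1] above the
    old value of [P_2]. *)

From Stdlib Require Import Reals Lra Lia Wf_nat ClassicalEpsilon.
Open Scope R_scope.

Lemma incr_lt (t : nat -> R) : (forall n, t n < t (S n)) ->
  forall i j, (i < j)%nat -> t i < t j.
Proof.
  intros Ht i j Hij. induction Hij as [|j _ IH]; [apply Ht|].
  specialize (Ht j). lra.
Qed.

Lemma incr_le (t : nat -> R) : (forall n, t n < t (S n)) ->
  forall i j, (i <= j)%nat -> t i <= t j.
Proof.
  intros Ht i j Hij. destruct (Nat.eq_dec i j) as [->|Hne]; [lra|].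
  left. apply incr_lt; [exact Ht | lia].
Qed.

Lemma block_exists (t : nat -> R) : (forall n, t n < t (S n)) ->
  (forall M, exists n, M < t n) -> forall q, t 0%nat <= q ->
  exists n, t n <= q < t (S n).
Proof.
  intros Ht Hu q Hq. destruct (Hu q) as [N HN]. induction N as [|N IH]; [lra|].
  destruct (Rlt_or_le q (t N)); [apply IH; assumption | exists N; lra].
Qed.

Lemma block_unique (t : nat -> R) : (forall n, t n < t (S n)) ->
  forall n m q, t n <= q < t (S n) -> t m <= q < t (S m) -> n = m.
Proof.
  intros Ht n m q Hn Hm. destruct (Nat.lt_total n m) as [H|[H|H]]; [|exact H|].
  - assert (t (S n) <= t m) by (apply incr_le; auto). lra.
  - assert (t (S m) <= t n) by (apply incr_le; auto). lra.
Qed.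

Definition block_index (t : nat -> R) (q : R) : nat :=
  epsilon (inhabits 0%nat) (fun n => t n <= q < t (S n)).

Lemma block_index_spec (t : nat -> R) : (forall n, t n < t (S n)) ->
  (forall M, exists n, M < t n) -> forall q, t 0%nat <= q ->
  t (block_index t q) <= q < t (S (block_index t q)).
Proof. intros Ht Hu q Hq. unfold block_index. apply epsilon_spec, block_exists; auto. Qed.

Lemma block_index_eq (t : nat -> R) : (forall n, t n < t (S n)) ->
  forall n q, t n <= q < t (S n) -> block_index t q = n.
Proof.
  intros Ht n q Hq. apply (block_unique t Ht _ _ q); [|exact Hq].
  unfold block_index. apply epsilon_spec. exists n. exact Hq.
Qed.

(** [St k b] is the value of component [k] at the [b]-th breakpoint, and [r b] the
    component moving between breakpoints [b] and [S b]. Since the components of a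
    3-system sum to [q], the breakpoints are the sums of the states. *)
Definition breakpoint (St : nat -> nat -> R) (b : nat) : R :=
  St 1%nat b + St 2%nat b + St 3%nat b.

Definition interpolate (St : nat -> nat -> R) (r : nat -> nat) (k : nat) (q : R) : R :=
  let b := block_index (breakpoint St) q in
  St k b + (if Nat.eqb k (r b) then q - breakpoint St b else 0).

Record state_sequence {St : nat -> nat -> R} {r : nat -> nat} : Prop := {
  moving_range : forall b, (1 <= r b <= 3)%nat;
  moving_increases : forall b, St (r b) b < St (r b) (S b);
  others_fixed : forall b k, k <> r b -> St k (S b) = St k b;
  states_ordered : forall b,
    0 <= St 1%nat b /\ St 1%nat b <= St 2%nat b /\ St 2%nat b <= St 3%nat b;
  states_merge : forall b, (r b < r (S b))%nat ->
    forall k, (r b <= k <= r (S b))%nat -> St k (S b) = St (r b) (S b);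
  breakpoint_unbounded : forall M, exists b, M < breakpoint St b }.
Arguments state_sequence : clear implicits.

Section Interpolation.

Variables (St : nat -> nat -> R) (r : nat -> nat).
Hypothesis HS : state_sequence St r.

Lemma mover_cases b : r b = 1%nat \/ r b = 2%nat \/ r b = 3%nat.
Proof. pose proof (moving_range HS b). lia. Qed.

Lemma breakpoint_S b :
  breakpoint St (S b) = breakpoint St b + (St (r b) (S b) - St (r b) b).
Proof.
  unfold breakpoint. pose proof (others_fixed HS b) as Hf.
  destruct (mover_cases b) as [E|[E|E]]; rewrite E in *;
    repeat rewrite (Hf 1%nat) by lia; repeat rewrite (Hf 2%nat) by lia;
    repeat rewrite (Hf 3%nat) by lia; lra.
Qed.

Lemma breakpoint_increasing b : breakpoint St b < breakpoint St (S b).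
Proof. rewrite breakpoint_S. pose proof (moving_increases HS b). lra. Qed.

Lemma block_index_breakpoint q : breakpoint St 0%nat <= q ->
  let b := block_index (breakpoint St) q in
  breakpoint St b <= q < breakpoint St (S b).
Proof.
  apply block_index_spec; [exact breakpoint_increasing | exact (breakpoint_unbounded HS)].
Qed.

Lemma interpolate_on_block b k q : breakpoint St b <= q <= breakpoint St (S b) ->
  interpolate St r k q = St k b + (if Nat.eqb k (r b) then q - breakpoint St b else 0).
Proof.
  intros Hq. destruct (Req_dec q (breakpoint St (S b))) as [->|Hne].
  - unfold interpolate.
    rewrite (block_index_eq _ breakpoint_increasing (S b))
      by (pose proof (breakpoint_increasing (S b)); lra).
    destruct (Nat.eqb_spec k (r b)) as [->|Hk].
    + rewrite breakpoint_S. destruct (Nat.eqb _ _); lra.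
    + rewrite (others_fixed HS b k Hk). destruct (Nat.eqb _ _); lra.
  - unfold interpolate. rewrite (block_index_eq _ breakpoint_increasing b) by lra.
    reflexivity.
Qed.

Lemma interpolate_at_breakpoint b k : interpolate St r k (breakpoint St b) = St k b.
Proof.
  rewrite (interpolate_on_block b) by (pose proof (breakpoint_increasing b); lra).
  destruct (Nat.eqb _ _); lra.
Qed.

Lemma interpolate_is_3system : is_3system (breakpoint St 0%nat) (interpolate St r).
Proof.
  exists (breakpoint St), r. split; [reflexivity|].
  split; [exact breakpoint_increasing|]. split; [exact (breakpoint_unbounded HS)|].
  split; [exact (moving_range HS)|]. split.
  { intros n k q _ Hq. rewrite (interpolate_on_block n k q Hq), interpolate_at_breakpoint.
    reflexivity. }
  split.
  - intros q Hq. pose proof (block_index_breakpoint q Hq) as Hb.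
    set (b := block_index (breakpoint St) q) in Hb.
    assert (Hq' : breakpoint St b <= q <= breakpoint St (S b)) by lra.
    rewrite !(interpolate_on_block b _ q Hq').
    pose proof (breakpoint_S b) as Hbp. pose proof (others_fixed HS b) as Hf.
    pose proof (states_ordered HS b). pose proof (states_ordered HS (S b)).
    destruct (mover_cases b) as [E|[E|E]]; rewrite E in *; simpl;
      repeat rewrite (Hf 1%nat) in * by lia; repeat rewrite (Hf 2%nat) in * by lia;
      repeat rewrite (Hf 3%nat) in * by lia; unfold breakpoint in *; lra.
  - intros n Hn k Hk. rewrite !interpolate_at_breakpoint. exact (states_merge HS n Hn k Hk).
Qed.

Lemma states_monotone k b b' : (b <= b')%nat -> St k b <= St k b'.
Proof.
  intros Hb. induction Hb as [|b' _ IH]; [lra|].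
  destruct (Nat.eq_dec k (r b')) as [->|Hk].
  - pose proof (moving_increases HS b'). lra.
  - rewrite (others_fixed HS b' k Hk). exact IH.
Qed.

Lemma interpolate_ge_state k b q : breakpoint St b <= q -> St k b <= interpolate St r k q.
Proof.
  intros Hq.
  assert (H0 : breakpoint St 0%nat <= q)
    by (pose proof (incr_le _ breakpoint_increasing 0 b ltac:(lia)); lra).
  pose proof (block_index_breakpoint q H0) as Hn.
  set (n := block_index (breakpoint St) q) in Hn.
  assert (Hbn : (b <= n)%nat).
  { destruct (Nat.le_gt_cases b n) as [|Hlt]; [assumption|].
    pose proof (incr_le _ breakpoint_increasing (S n) b Hlt). lra. }
  rewrite (interpolate_on_block n k q) by lra.
  pose proof (states_monotone k b n Hbn). destruct (Nat.eqb _ _); lra.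
Qed.

Lemma interpolate_tends_to_infinity k : (forall M, exists b, M < St k b) ->
  forall M, exists N, forall q, N <= q -> M < interpolate St r k q.
Proof.
  intros Hu M. destruct (Hu M) as [b Hb]. exists (breakpoint St b). intros q Hq.
  pose proof (interpolate_ge_state k b q Hq). lra.
Qed.

Lemma interpolate_constant k a c : (a <= c)%nat ->
  (forall i, (a <= i < c)%nat -> r i <> k) ->
  forall q, breakpoint St a <= q <= breakpoint St c -> interpolate St r k q = St k a.
Proof.
  intros Hac Hr. induction Hac as [|c Hac IH]; intros q Hq.
  - replace q with (breakpoint St a) by lra. apply interpolate_at_breakpoint.
  - assert (IH' : forall q, breakpoint St a <= q <= breakpoint St c ->
                   interpolate St r k q = St k a) by (apply IH; intros i Hi; apply Hr; lia).
    destruct (Rle_or_lt q (breakpoint St c)); [apply IH'; lra|].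
    rewrite (interpolate_on_block c k q) by lra.
    destruct (Nat.eqb_spec k (r c)) as [E|_]; [exfalso; apply (Hr c); [lia | auto]|].
    rewrite <- (interpolate_at_breakpoint c k), IH'; [lra|].
    pose proof (incr_le _ breakpoint_increasing a c Hac). lra.
Qed.

Lemma interpolate_rising b q : breakpoint St b <= q <= breakpoint St (S b) ->
  interpolate St r (r b) q = St (r b) b + (q - breakpoint St b).
Proof. intros Hq. rewrite (interpolate_on_block b _ q Hq), Nat.eqb_refl. reflexivity. Qed.

End Interpolation.

Lemma div_le_iff (a c q : R) : 0 < q -> (a / q <= c <-> a <= c * q).
Proof.
  intros Hq. split; intros H.
  - apply (Rmult_le_compat_r q) in H; [|lra].
    unfold Rdiv in H. rewrite Rmult_assoc, Rinv_l, Rmult_1_r in H by lra. exact H.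
  - apply Rmult_le_reg_r with q; [exact Hq|].
    unfold Rdiv. rewrite Rmult_assoc, Rinv_l, Rmult_1_r by lra. exact H.
Qed.

Lemma le_div_iff (a c q : R) : 0 < q -> (c <= a / q <-> c * q <= a).
Proof.
  intros Hq. split; intros H.
  - apply (Rmult_le_compat_r q) in H; [|lra].
    unfold Rdiv in H. rewrite Rmult_assoc, Rinv_l, Rmult_1_r in H by lra. exact H.
  - apply Rmult_le_reg_r with q; [exact Hq|].
    unfold Rdiv. rewrite Rmult_assoc, Rinv_l, Rmult_1_r by lra. exact H.
Qed.

(** The steps [n >= 1] at which [v n] is close to its supremum [phi] are exactly the
    [M j] for [j] large; [v n] will be the value of [P_3 (q) / q] where step [n] starts. *)
Definition peaks_along (v : nat -> R) (M : nat -> nat) (phi : R) : Prop :=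
  (forall j, (M j < M (S j))%nat) /\ (forall j, (1 <= M j)%nat) /\
  (forall n, (1 <= n)%nat -> v n <= phi) /\
  exists delta, 0 < delta /\ forall alpha, phi - delta < alpha < phi ->
    exists j0, forall n, (1 <= n)%nat -> (alpha <= v n <-> exists j, (j0 <= j)%nat /\ n = M j).

Lemma nat_incr_ge (M : nat -> nat) : (forall j, (M j < M (S j))%nat) -> forall j, (j <= M j)%nat.
Proof. intros HM j. induction j as [|j IH]; [lia | specialize (HM j); lia]. Qed.

Lemma peaks_along_approach v M phi : peaks_along v M phi ->
  forall eps, 0 < eps -> forall N, exists n, (N <= n)%nat /\ phi - eps < v n.
Proof.
  intros [HM [HM1 [_ [delta [Hdelta Hthr]]]]] eps Heps N.
  assert (Hm : 0 < Rmin eps delta) by (apply Rmin_glb_lt; lra).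
  pose proof (Rmin_l eps delta).
  destruct (Hthr (phi - Rmin eps delta / 2)) as [j0 Hj0].
  { pose proof (Rmin_r eps delta). lra. }
  exists (M (Nat.max j0 N)). split.
  - pose proof (nat_incr_ge M HM (Nat.max j0 N)). lia.
  - assert (phi - Rmin eps delta / 2 <= v (M (Nat.max j0 N))); [|lra].
    apply Hj0; [apply HM1|]. exists (Nat.max j0 N). split; [lia | reflexivity].
Qed.

Record staircase {f : R -> R} {Q d : nat -> R} : Prop := {
  stair_start_pos : 0 < Q 0%nat;
  stair_increasing : forall n, Q n < Q (S n);
  stair_unbounded : forall M, exists n, M < Q n;
  step_increasing : forall n, d n < d (S n);
  step_short : forall n, d (S n) - d n < Q (S n) - Q n;
  stair_flat : forall n q, Q n <= q <= Q (S n) - (d (S n) - d n) -> f q = d n;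
  stair_rise : forall n q, Q (S n) - (d (S n) - d n) <= q <= Q (S n) ->
    f q = d (S n) - (Q (S n) - q) }.
Arguments staircase : clear implicits.

Section Staircase.

Variables (f : R -> R) (Q d : nat -> R).
Hypothesis HS : staircase f Q d.

Lemma staircase_at n : f (Q n) = d n.
Proof. apply (stair_flat HS). pose proof (step_short HS n). lra. Qed.

Lemma staircase_pos n : 0 < Q n.
Proof.
  pose proof (incr_le Q (stair_increasing HS) 0 n ltac:(lia)).
  pose proof (stair_start_pos HS). lra.
Qed.

Lemma staircase_slope_change n : slope_1_to_0 (Q 0%nat) f (Q (S n)).
Proof.
  pose proof (step_short HS n) as A. pose proof (step_short HS (S n)) as B.
  pose proof (step_increasing HS n) as C. pose proof (step_increasing HS (S n)) as D.
  pose proof (incr_le Q (stair_increasing HS) 0 n ltac:(lia)).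
  split; [pose proof (stair_increasing HS n); lra|].
  set (eps := Rmin (d (S n) - d n) (Q (S (S n)) - (d (S (S n)) - d (S n)) - Q (S n))).
  assert (E1 : eps <= d (S n) - d n) by apply Rmin_l.
  assert (E2 : eps <= Q (S (S n)) - (d (S (S n)) - d (S n)) - Q (S n)) by apply Rmin_r.
  assert (E3 : 0 < eps) by (apply Rmin_glb_lt; lra).
  exists eps. split; [lra|]. split; [lra|]. split.
  - intros x Hx. rewrite !(stair_rise HS n) by lra. lra.
  - intros x Hx. rewrite !(stair_flat HS (S n)) by lra. reflexivity.
Qed.

Lemma staircase_slope_change_inv q : slope_1_to_0 (Q 0%nat) f q -> exists n, q = Q (S n).
Proof.
  intros [Hq [eps [He [_ [HL HR]]]]].
  destruct (block_exists Q (stair_increasing HS) (stair_unbounded HS) q ltac:(lra)) as [n Hn].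
  destruct (Req_dec q (Q n)) as [E|E].
  { destruct n as [|n]; [lra | exists n; exact E]. }
  exfalso. destruct (Rle_or_lt q (Q (S n) - (d (S n) - d n))).
  - set (x := Rmax (q - eps) (Q n)).
    assert (Hx : q - eps <= x < q) by (split; [apply Rmax_l | apply Rmax_lub_lt; lra]).
    assert (Q n <= x) by apply Rmax_r.
    specialize (HL x ltac:(lra)). rewrite !(stair_flat HS n) in HL by lra. lra.
  - set (x := Rmin (q + eps) (Q (S n))).
    assert (Hx : q < x <= q + eps) by (split; [apply Rmin_glb_lt; lra | apply Rmin_l]).
    assert (x <= Q (S n)) by apply Rmin_r.
    specialize (HR x ltac:(lra)). rewrite !(stair_rise HS n) in HR by lra. lra.
Qed.

Lemma staircase_le phi : 0 <= phi <= 1 ->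
  (forall n, (1 <= n)%nat -> d n <= phi * Q n) ->
  forall q, Q 1%nat <= q -> f q <= phi * q.
Proof.
  intros Hphi Hd q Hq.
  assert (Q 0%nat <= Q 1%nat) by (left; apply (stair_increasing HS)).
  destruct (block_exists Q (stair_increasing HS) (stair_unbounded HS) q ltac:(lra)) as [n Hn].
  assert (Hn1 : (1 <= n)%nat) by (destruct n; [lra | lia]).
  destruct (Rle_or_lt q (Q (S n) - (d (S n) - d n))).
  - rewrite (stair_flat HS n q) by lra. specialize (Hd n Hn1). nra.
  - rewrite (stair_rise HS n q) by lra. specialize (Hd (S n) ltac:(lia)). nra.
Qed.

Lemma staircase_phibar phi (M : nat -> nat) : 0 <= phi <= 1 ->
  peaks_along (fun n => d n / Q n) M phi -> phibar_is f phi.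
Proof.
  intros Hphi Hpeak eps Heps. split.
  - exists (Q 1%nat). intros q Hq.
    assert (Hq0 : 0 < q) by (pose proof (staircase_pos 1); lra).
    assert (f q / q <= phi); [|lra].
    apply div_le_iff; [exact Hq0|]. apply staircase_le; [exact Hphi| |exact Hq].
    intros n Hn. destruct Hpeak as [_ [_ [Hle _]]]. specialize (Hle n Hn).
    apply div_le_iff in Hle; [lra | apply staircase_pos].
  - intros N0. destruct (stair_unbounded HS N0) as [N HN].
    destruct (peaks_along_approach _ M phi Hpeak eps Heps N) as [n [Hn Hd]].
    exists (Q n). rewrite staircase_at. split; [|exact Hd].
    pose proof (incr_le Q (stair_increasing HS) N n Hn). lra.
Qed.

Lemma staircase_kappa phi kap (M : nat -> nat) : phibar_is f phi ->
  peaks_along (fun n => d n / Q n) M phi ->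
  Un_cv (fun j => d (M j) / (Q (M (S j)) - d (M (S j)) + d (M j))) kap ->
  kappa_is (Q 0%nat) f kap.
Proof.
  intros Hphi [HM [HM1 [_ [delta [Hdelta Hthr]]]]] Hcv. split.
  { exists (fun i => Q (S i)). split; [intros i; apply (stair_increasing HS)|]. split.
    - intros i. apply staircase_slope_change.
    - intros q Hq. destruct (staircase_slope_change_inv q Hq) as [n ->]. exists n. reflexivity. }
  exists phi. split; [exact Hphi|]. intros eps Heps. exists delta. split; [exact Hdelta|].
  intros alpha Ha. destruct (Hthr alpha Ha) as [j0 Hj0]. exists kap.
  split; [|rewrite Rminus_diag, Rabs_R0; exact Heps].
  (* along the tail of [M] from [j0] the liminf is a limit *)
  exists (fun i => Q (M (i + j0)%nat)). split; [split; [|split]|].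
  - intros i. apply incr_lt; [apply (stair_increasing HS) | apply HM].
  - intros i. rewrite staircase_at. split.
    + replace (M (i + j0)%nat) with (S (pred (M (i + j0)%nat)))
        by (specialize (HM1 (i + j0)%nat); lia).
      apply staircase_slope_change.
    + apply Hj0; [apply HM1|]. exists (i + j0)%nat. split; [lia | reflexivity].
  - intros q [Hs Hq]. destruct (staircase_slope_change_inv q Hs) as [n ->].
    rewrite staircase_at in Hq. apply Hj0 in Hq; [|lia]. destruct Hq as [j [Hj E]].
    exists (j - j0)%nat. rewrite Nat.sub_add, E by exact Hj. reflexivity.
  - intros eps' Heps'. destruct (Hcv eps' Heps') as [N HN].
    assert (Hr : forall n, (N <= n)%nat -> Rabs (f (Q (M (n + j0)%nat)) /
      (Q (M (S n + j0)%nat) - f (Q (M (S n + j0)%nat)) + f (Q (M (n + j0)%nat))) - kap) < eps').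
    { intros n Hn. rewrite !staircase_at. apply (HN (n + j0)%nat). lia. }
    split.
    + exists N. intros n Hn. specialize (Hr n Hn). apply Rabs_def2 in Hr. lra.
    + intros N'. exists (Nat.max N N'). split; [lia|].
      specialize (Hr (Nat.max N N') ltac:(lia)). apply Rabs_def2 in Hr. lra.
Qed.

End Staircase.

Definition realizable (phi kap : R) : Prop :=
  exists (q0 : R) (P : nat -> R -> R),
    0 <= q0 /\ is_3system q0 P /\
    (forall M, exists N, forall q, N <= q -> M < P 1%nat q) /\
    phibar_is (P 3%nat) phi /\ kappa_is q0 (P 3%nat) kap.

Lemma realizable_of_staircase St r Q d M phi kap :
  state_sequence St r -> (forall X, exists b, X < St 1%nat b) ->
  staircase (interpolate St r 3) Q d -> Q 0%nat = breakpoint St 0%nat ->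
  0 <= phi <= 1 -> peaks_along (fun n => d n / Q n) M phi ->
  Un_cv (fun j => d (M j) / (Q (M (S j)) - d (M (S j)) + d (M j))) kap ->
  realizable phi kap.
Proof.
  intros HSt HP1 Hstair HQ0 Hphi Hpeak Hcv.
  pose proof (staircase_phibar _ Q d Hstair phi M Hphi Hpeak) as Hphibar.
  exists (breakpoint St 0%nat), (interpolate St r). split.
  { rewrite <- HQ0. pose proof (stair_start_pos Hstair). lra. }
  split; [exact (interpolate_is_3system St r HSt)|].
  split; [exact (interpolate_tends_to_infinity St r HSt 1 HP1)|].
  split; [exact Hphibar|]. rewrite <- HQ0.
  exact (staircase_kappa _ Q d Hstair phi kap M Hphibar Hpeak Hcv).
Qed.

Fixpoint growth (rho : nat -> R) (n : nat) : R :=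
  match n with
  | O => 1
  | S m => growth rho m * rho m
  end.

Section Growth.

Variables (rho : nat -> R) (c : R).
Hypotheses (Hc : 1 < c) (Hrho : forall n, c <= rho n).

Lemma growth_lower n : 1 + INR n * (c - 1) <= growth rho n.
Proof.
  induction n as [|n IH]; [simpl; lra|]. rewrite S_INR. simpl. specialize (Hrho n).
  pose proof (pos_INR n).
  assert (0 <= (growth rho n - 1) * (c - 1)) by (apply Rmult_le_pos; nra).
  assert (0 <= growth rho n * (rho n - c)) by (apply Rmult_le_pos; nra).
  nra.
Qed.

Lemma growth_pos n : 0 < growth rho n.
Proof. pose proof (growth_lower n). pose proof (pos_INR n). nra. Qed.

Lemma growth_increasing n : growth rho n < growth rho (S n).
Proof. simpl. pose proof (growth_pos n). specialize (Hrho n). nra. Qed.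

Lemma growth_unbounded X : exists n, X < growth rho n.
Proof.
  destruct (INR_archimed (c - 1) X) as [n Hn]; [lra|].
  exists n. pose proof (growth_lower n). lra.
Qed.

End Growth.

Lemma growth_constant_run rho h a m : (forall i, (a <= i < a + m)%nat -> rho i = h) ->
  growth rho (a + m) = growth rho a * h ^ m.
Proof.
  induction m as [|m IH]; intros H; [rewrite Nat.add_0_r; simpl; lra|].
  rewrite Nat.add_succ_r. simpl. rewrite (H (a + m)%nat) by lia.
  rewrite IH by (intros i Hi; apply H; lia). ring.
Qed.

Definition component (k : nat) (s : R * R * R) : R :=
  match k, s with
  | 1%nat, (x, _, _) => x
  | 2%nat, (_, y, _) => y
  | 3%nat, (_, _, z) => z
  | _, _ => 0
  end.

(** A state sequence of period [p]: [T n j] is the state in phase [j] of the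
    [n]-th period and [m j] the component moving in phase [j]. *)
Definition periodic_states (p : nat) (T : nat -> nat -> R * R * R) (k b : nat) : R :=
  component k (T (b / p) (b mod p))%nat.

Definition periodic_mover (p : nat) (m : nat -> nat) (b : nat) : nat := m (b mod p)%nat.

Definition next_state (p : nat) (T : nat -> nat -> R * R * R) (n j : nat) : R * R * R :=
  if Nat.ltb (S j) p then T n (S j) else T (S n) 0%nat.

Definition next_mover (p : nat) (m : nat -> nat) (j : nat) : nat :=
  if Nat.ltb (S j) p then m (S j) else m 0%nat.

Lemma periodic_decompose p b : (0 < p)%nat -> exists n j, (j < p)%nat /\ b = (p * n + j)%nat.
Proof.
  intros Hp. exists (b / p)%nat, (b mod p)%nat.
  split; [apply Nat.mod_upper_bound; lia | apply Nat.div_mod; lia].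
Qed.

Lemma periodic_div_mod p n j : (j < p)%nat -> ((p * n + j) / p = n /\ (p * n + j) mod p = j)%nat.
Proof.
  intros H. split; symmetry;
    [apply Nat.div_unique with j | apply Nat.mod_unique with n]; lia.
Qed.

Lemma periodic_states_eq p T k n j : (j < p)%nat ->
  periodic_states p T k (p * n + j) = component k (T n j).
Proof.
  intros H. unfold periodic_states. destruct (periodic_div_mod p n j H) as [-> ->]. reflexivity.
Qed.

Lemma periodic_mover_eq p m n j : (j < p)%nat -> periodic_mover p m (p * n + j) = m j.
Proof.
  intros H. unfold periodic_mover. destruct (periodic_div_mod p n j H) as [_ ->]. reflexivity.
Qed.

Lemma periodic_succ p n j : (j < p)%nat ->
  (S j < p /\ S (p * n + j) = p * n + S j)%nat \/ (S j = p /\ S (p * n + j) = p * S n + 0)%nat.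
Proof. intros H. destruct (Nat.eq_dec (S j) p); [right | left]; lia. Qed.

Lemma periodic_states_S p T k n j : (j < p)%nat ->
  periodic_states p T k (S (p * n + j)) = component k (next_state p T n j).
Proof.
  intros H. unfold next_state.
  destruct (periodic_succ p n j H) as [[Hj ->]|[Hj ->]].
  - rewrite (proj2 (Nat.ltb_lt _ _) Hj). apply periodic_states_eq. exact Hj.
  - replace (Nat.ltb (S j) p) with false by (symmetry; apply Nat.ltb_ge; lia).
    apply periodic_states_eq. lia.
Qed.

Lemma periodic_mover_S p m n j : (j < p)%nat ->
  periodic_mover p m (S (p * n + j)) = next_mover p m j.
Proof.
  intros H. unfold next_mover.
  destruct (periodic_succ p n j H) as [[Hj ->]|[Hj ->]].
  - rewrite (proj2 (Nat.ltb_lt _ _) Hj). apply periodic_mover_eq. exact Hj.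
  - replace (Nat.ltb (S j) p) with false by (symmetry; apply Nat.ltb_ge; lia).
    apply periodic_mover_eq. lia.
Qed.

Lemma periodic_state_sequence p T m : (0 < p)%nat ->
  (forall j, (j < p)%nat -> (1 <= m j <= 3)%nat) ->
  (forall n j, (j < p)%nat -> component (m j) (T n j) < component (m j) (next_state p T n j)) ->
  (forall n j k, (j < p)%nat -> k <> m j ->
     component k (next_state p T n j) = component k (T n j)) ->
  (forall n j, (j < p)%nat -> 0 <= component 1 (T n j) /\
     component 1 (T n j) <= component 2 (T n j) /\ component 2 (T n j) <= component 3 (T n j)) ->
  (forall n j, (j < p)%nat -> (m j < next_mover p m j)%nat ->
     forall k, (m j <= k <= next_mover p m j)%nat ->
     component k (next_state p T n j) = component (m j) (next_state p T n j)) ->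
  (forall X, exists n, X < breakpoint (periodic_states p T) (p * n)) ->
  state_sequence (periodic_states p T) (periodic_mover p m).
Proof.
  intros Hp Hm Hinc Hfix Hord Hmerge Hunb.
  split; [| | | | |intros X; destruct (Hunb X) as [n Hn]; exists (p * n)%nat; exact Hn];
    intros b; destruct (periodic_decompose p b Hp) as [n [j [Hj ->]]].
  - rewrite periodic_mover_eq by exact Hj. exact (Hm j Hj).
  - rewrite periodic_mover_eq, periodic_states_S, periodic_states_eq by exact Hj.
    exact (Hinc n j Hj).
  - intros k Hk. rewrite periodic_mover_eq in Hk by exact Hj.
    rewrite periodic_states_S, periodic_states_eq by exact Hj. exact (Hfix n j k Hj Hk).
  - rewrite !periodic_states_eq by exact Hj. exact (Hord n j Hj).
  - rewrite periodic_mover_S, periodic_mover_eq by exact Hj. intros Hlt k Hk.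
    rewrite !periodic_states_S by exact Hj. exact (Hmerge n j Hj Hlt k Hk).
Qed.

Definition tableB (D : nat -> R) (n j : nat) : R * R * R :=
  match j with
  | 0%nat => (D n, D n, D (S n))
  | 1%nat => (D n, D (S n), D (S n))
  | _ => (D (S n), D (S n), D (S n))
  end.

Definition moverB (j : nat) : nat :=
  match j with 0%nat => 2%nat | 1%nat => 1%nat | _ => 3%nat end.

Section FamilyB.

Variable D : nat -> R.
Hypotheses (HDpos : forall n, 0 < D n) (HDinc : forall n, D n < D (S n))
  (HDunb : forall X, exists n, X < D n).

Let St := periodic_states 3 (tableB D).
Let r := periodic_mover 3 moverB.

Lemma tableB_sequence : state_sequence St r.
Proof.
  apply periodic_state_sequence; [lia | intros j Hj | intros n j Hj | intros n j k Hj Hk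
    | intros n j Hj | intros n j Hj Hlt k Hk | intros X];
    try (destruct j as [|[|[|j]]]; [| | |lia]; unfold next_state, next_mover in *; simpl in *).
  all: try (pose proof (HDpos n); pose proof (HDinc n); pose proof (HDinc (S n))).
  all: try lia; try lra.
  all: try (destruct k as [|[|[|[|k]]]]; first [lia | reflexivity]).
  destruct (HDunb X) as [n Hn]. exists n. unfold breakpoint.
  rewrite <- (Nat.add_0_r (3 * n)), !periodic_states_eq by lia. simpl.
  pose proof (HDpos n). pose proof (HDpos (S n)). lra.
Qed.

Lemma tableB_breakpoint n j : (j < 3)%nat ->
  breakpoint St (3 * n + j) = match j with 0%nat => 2 * D n + D (S n) | 1%nat => D n + 2 * D (S n)
    | _ => 3 * D (S n) end.
Proof.
  intros Hj. unfold breakpoint, St. rewrite !periodic_states_eq by exact Hj.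
  destruct j as [|[|[|j]]]; [| | |lia]; simpl; ring.
Qed.

Lemma tableB_staircase :
  staircase (interpolate St r 3) (fun n => 2 * D n + D (S n)) (fun n => D (S n)).
Proof.
  pose proof tableB_sequence as HS.
  assert (Hnext : forall n, (S (3 * n + 2) = 3 * S n + 0)%nat) by (intros; lia).
  split; cbv beta.
  - pose proof (HDpos 0%nat). pose proof (HDpos 1%nat). lra.
  - intros n. pose proof (HDinc n). pose proof (HDinc (S n)). lra.
  - intros X. destruct (HDunb X) as [n Hn]. exists n.
    pose proof (HDpos n). pose proof (HDpos (S n)). lra.
  - intros n. apply HDinc.
  - intros n. pose proof (HDinc n). lra.
  - intros n q Hq. rewrite (interpolate_constant St r HS 3 (3 * n + 0) (3 * n + 2)).
    + unfold St. rewrite periodic_states_eq by lia. reflexivity.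
    + lia.
    + intros i Hi. assert (i = 3 * n + 0 \/ i = 3 * n + 1)%nat as [->| ->] by lia;
        unfold r; rewrite periodic_mover_eq by lia; discriminate.
    + rewrite !tableB_breakpoint by lia. lra.
  - intros n q Hq.
    replace 3%nat with (r (3 * n + 2)%nat) at 1
      by (unfold r; rewrite periodic_mover_eq by lia; reflexivity).
    rewrite (interpolate_rising St r HS (3 * n + 2)).
    + unfold St, r. rewrite periodic_mover_eq, periodic_states_eq, tableB_breakpoint by lia.
      simpl. lra.
    + rewrite Hnext, !tableB_breakpoint by lia. lra.
Qed.

End FamilyB.

Lemma growing_cv_threshold (v : nat -> R) (phi alpha : R) :
  Un_growing v -> Un_cv v phi -> alpha < phi ->
  exists j0, forall j, alpha <= v j <-> (j0 <= j)%nat.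
Proof.
  intros Hgrow Hcv Ha.
  destruct (dec_inh_nat_subset_has_unique_least_element (fun j => alpha <= v j))
    as [j0 [[Hj0 Hleast] _]].
  - intros j. destruct (Rle_dec alpha (v j)); [left | right]; assumption.
  - destruct (Hcv (phi - alpha) ltac:(lra)) as [N HN]. exists N.
    specialize (HN N (le_n N)). unfold Rdist in HN. apply Rabs_def2 in HN. lra.
  - exists j0. intros j. split; [apply Hleast|].
    intros Hj. pose proof (growing_prop v j j0 Hgrow Hj). lra.
Qed.

Lemma Un_cv_subseq (v : nat -> R) (M : nat -> nat) (l : R) :
  (forall j, (j <= M j)%nat) -> Un_cv v l -> Un_cv (fun j => v (M j)) l.
Proof.
  intros HM Hcv eps Heps. destruct (Hcv eps Heps) as [N HN].
  exists N. intros j Hj. apply HN. specialize (HM j). lia.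
Qed.

Lemma Un_cv_const (c : R) : Un_cv (fun _ => c) c.
Proof.
  intros eps Heps. exists 0%nat. intros n _. unfold Rdist. rewrite Rminus_diag, Rabs_R0. exact Heps.
Qed.

Lemma Un_cv_bounds (v : nat -> R) (a b l : R) : (forall n, a <= v n <= b) -> Un_cv v l ->
  a <= l <= b.
Proof.
  intros Hv Hcv. split.
  - apply (Rle_cv_lim (Un := fun _ => a) (Vn := v)); [apply Hv | apply Un_cv_const | exact Hcv].
  - apply (Rle_cv_lim (Un := v) (Vn := fun _ => b)); [apply Hv | exact Hcv | apply Un_cv_const].
Qed.

(** Main steps are separated by runs of [gap j] ordinary steps. *)
Fixpoint main_step (gap : nat -> nat) (j : nat) : nat :=
  match j with
  | O => 1%nat
  | S i => S (main_step gap i + gap i)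
  end.

Lemma main_step_increasing gap j : (main_step gap j < main_step gap (S j))%nat.
Proof. simpl. lia. Qed.

Lemma main_step_pos gap j : (1 <= main_step gap j)%nat.
Proof. destruct j; simpl; lia. Qed.

Lemma main_step_lt gap i j : (i < j)%nat -> (main_step gap i < main_step gap j)%nat.
Proof.
  intros Hij. induction Hij as [|j _ IH]; [apply main_step_increasing|].
  pose proof (main_step_increasing gap j). lia.
Qed.

Lemma main_step_inj gap i j : main_step gap i = main_step gap j -> i = j.
Proof.
  intros E. destruct (Nat.lt_total i j) as [H|[H|H]]; [| exact H |];
    pose proof (main_step_lt gap _ _ H); lia.
Qed.

Lemma main_step_between gap j i :
  (main_step gap j < i < main_step gap (S j))%nat -> ~ exists j', main_step gap j' = i.
Proof.
  intros Hi [j' <-]. destruct (Nat.lt_total j' j) as [H|[<-|H]].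
  - pose proof (main_step_lt gap _ _ H). lia.
  - lia.
  - assert (H' : (S j <= j')%nat) by lia. destruct (Nat.eq_dec j' (S j)) as [->|Hne]; [lia|].
    pose proof (main_step_lt gap (S j) j' ltac:(lia)). lia.
Qed.

Definition multiplierB (gap : nat -> nat) (gm : nat -> R) (h : R) (n : nat) : R :=
  if excluded_middle_informative (exists j, main_step gap j = n) then gm n else h.

Lemma frac_plus_le (a x y : R) : 0 < a -> 0 <= x <= y -> x / (a + x) <= y / (a + y).
Proof.
  intros Ha Hxy. apply Rmult_le_reg_r with ((a + x) * (a + y)); [nra|].
  field_simplify; [nra | lra | lra].
Qed.

Lemma frac_plus_lt (a x y : R) : 0 < a -> 0 <= x < y -> x / (a + x) < y / (a + y).
Proof.
  intros Ha Hxy. apply Rmult_lt_reg_r with ((a + x) * (a + y)); [nra|].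
  field_simplify; [nra | lra | lra].
Qed.

Section FamilyBMultipliers.

Variables (gap : nat -> nat) (gm : nat -> R) (h phi : R).
Hypotheses (Hh : 1 < h < gm 0%nat) (Hgrow : Un_growing gm)
  (Hphi : Un_cv (fun n => gm n / (2 + gm n)) phi).

Let M := main_step gap.
Let rho := multiplierB gap gm h.
Let D := growth rho.

Lemma gm_ge_h n : h <= gm n.
Proof. pose proof (growing_prop gm n 0 Hgrow ltac:(lia)). lra. Qed.

Lemma multiplierB_ge n : h <= rho n.
Proof.
  unfold rho, multiplierB. destruct (excluded_middle_informative _); [apply gm_ge_h | lra].
Qed.

Lemma growthB_pos n : 0 < D n.
Proof. exact (growth_pos rho h ltac:(lra) multiplierB_ge n). Qed.

Lemma growthB_increasing n : D n < D (S n).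
Proof. exact (growth_increasing rho h ltac:(lra) multiplierB_ge n). Qed.

Lemma growthB_unbounded X : exists n, X < D n.
Proof. exact (growth_unbounded rho h ltac:(lra) multiplierB_ge X). Qed.

Lemma familyB_step_ratio n : D (S n) / (2 * D n + D (S n)) = rho n / (2 + rho n).
Proof.
  pose proof (growthB_pos n). pose proof (multiplierB_ge n).
  change (D (S n)) with (D n * rho n). field. split; nra.
Qed.

Lemma familyB_phi_bounds : h / (2 + h) < phi <= 1.
Proof.
  set (w := fun n => gm n / (2 + gm n)).
  assert (Hw : Un_growing w).
  { intros n. apply frac_plus_le; [lra|]. pose proof (Hgrow n). pose proof (gm_ge_h n). lra. }
  split.
  - apply Rlt_le_trans with (w 0%nat); [apply frac_plus_lt; lra|].
    apply (growing_ineq w); assumption.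
  - apply (Un_cv_bounds w 0 1 phi); [|exact Hphi].
    intros n. unfold w. pose proof (gm_ge_h n).
    split; [apply Rlt_le, Rdiv_lt_0_compat | apply div_le_iff]; lra.
Qed.

Lemma familyB_peaks :
  peaks_along (fun n => D (S n) / (2 * D n + D (S n))) M phi.
Proof.
  set (w := fun j => gm (M j) / (2 + gm (M j))).
  assert (Hw_grow : Un_growing w).
  { intros j. apply frac_plus_le; [lra|]. pose proof (gm_ge_h (M j)).
    pose proof (main_step_increasing gap j) as Hj.
    pose proof (growing_prop gm (M (S j)) (M j) Hgrow ltac:(unfold M; lia)). lra. }
  assert (Hw_cv : Un_cv w phi)
    by (apply (Un_cv_subseq (fun n => gm n / (2 + gm n)) M);
        [apply nat_incr_ge, main_step_increasing | exact Hphi]).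
  pose proof familyB_phi_bounds as Hb.
  split; [exact (main_step_increasing gap)|]. split; [exact (main_step_pos gap)|].
  split.
  - intros n _. rewrite familyB_step_ratio. unfold rho, multiplierB.
    destruct (excluded_middle_informative _) as [[j <-]|]; [|lra].
    exact (growing_ineq w phi Hw_grow Hw_cv j).
  - exists (phi - h / (2 + h)). split; [lra|]. intros alpha Ha.
    destruct (growing_cv_threshold w phi alpha Hw_grow Hw_cv ltac:(lra)) as [j0 Hj0].
    exists j0. intros n _. rewrite familyB_step_ratio. unfold rho, multiplierB.
    destruct (excluded_middle_informative _) as [[j <-]|Hn].
    + change (alpha <= w j <-> exists j1, (j0 <= j1)%nat /\ M j = M j1).
      rewrite (Hj0 j). split; [intros; exists j; split; [assumption | reflexivity]|].
      intros [j' [Hj' E]]. apply main_step_inj in E. subst j'. exact Hj'.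
    + split; [lra|]. intros [j [_ E]]. exfalso. apply Hn. exists j. symmetry. exact E.
Qed.

Lemma familyB_kappa_ratio j :
  D (S (M j)) / (2 * D (M (S j)) + D (S (M (S j))) - D (S (M (S j))) + D (S (M j)))
  = / (2 * h ^ gap j + 1).
Proof.
  assert (Hrun : D (M (S j)) = D (S (M j)) * h ^ gap j).
  { unfold M, D. change (main_step gap (S j)) with (S (main_step gap j) + gap j)%nat.
    apply growth_constant_run. intros i Hi. unfold rho, multiplierB.
    destruct (excluded_middle_informative _) as [Hm|]; [|reflexivity].
    exfalso. apply (main_step_between gap j i); [simpl; lia | exact Hm]. }
  replace (2 * D (M (S j)) + D (S (M (S j))) - D (S (M (S j))) + D (S (M j)))
    with (D (S (M j)) * (2 * h ^ gap j + 1)) by (rewrite Hrun; ring).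
  pose proof (growthB_pos (S (M j))). assert (0 < h ^ gap j) by (apply pow_lt; lra).
  field. split; lra.
Qed.

End FamilyBMultipliers.

Theorem realizable_familyB (gap : nat -> nat) (gm : nat -> R) (h phi kap : R) :
  1 < h < gm 0%nat -> Un_growing gm -> Un_cv (fun n => gm n / (2 + gm n)) phi ->
  Un_cv (fun j => / (2 * h ^ gap j + 1)) kap ->
  realizable phi kap.
Proof.
  intros Hh Hgrow Hphi Hkap. set (D := growth (multiplierB gap gm h)).
  pose proof (growthB_pos gap gm h Hh Hgrow) as HD.
  pose proof (growthB_increasing gap gm h Hh Hgrow) as HDinc.
  pose proof (growthB_unbounded gap gm h Hh Hgrow) as HDunb.
  apply (realizable_of_staircase _ _ (fun n => 2 * D n + D (S n)) (fun n => D (S n))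
           (main_step gap) phi kap (tableB_sequence D HD HDinc HDunb)).
  - intros X. destruct (HDunb X) as [n Hn].
    exists (3 * n)%nat. rewrite <- (Nat.add_0_r (3 * n)), periodic_states_eq by lia. exact Hn.
  - exact (tableB_staircase D HD HDinc HDunb).
  - symmetry. exact (tableB_breakpoint D 0 0 ltac:(lia)).
  - pose proof (familyB_phi_bounds gm h phi Hh Hgrow Hphi).
    assert (0 < h / (2 + h)) by (apply Rdiv_lt_0_compat; lra). lra.
  - exact (familyB_peaks gap gm h phi Hh Hgrow Hphi).
  - eapply Un_cv_ext; [|exact Hkap]. intros j. symmetry.
    exact (familyB_kappa_ratio gap gm h Hh Hgrow j).
Qed.

Definition tableA (lo mid hi : nat -> R) (n j : nat) : R * R * R :=
  match j with
  | 0%nat => (lo n, mid n, hi n)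
  | 1%nat => (lo n, lo (S n), hi n)
  | 2%nat => (lo (S n), lo (S n), hi n)
  | _ => (lo (S n), hi n, hi n)
  end.

Definition moverA (j : nat) : nat :=
  match j with 0%nat => 2%nat | 1%nat => 1%nat | 2%nat => 2%nat | _ => 3%nat end.

Section FamilyA.

Variables lo mid hi : nat -> R.
Hypotheses
  (Horder : forall n, 0 <= lo n <= mid n /\ mid n < lo (S n) /\ lo (S n) < hi n /\ hi n < hi (S n))
  (Hmid : forall n, mid (S n) = hi n) (Hunb : forall X, exists n, X < hi n).

Let St := periodic_states 4 (tableA lo mid hi).
Let r := periodic_mover 4 moverA.

Lemma tableA_sequence : state_sequence St r.
Proof.
  apply periodic_state_sequence; [lia | intros j Hj | intros n j Hj | intros n j k Hj Hk
    | intros n j Hj | intros n j Hj Hlt k Hk | intros X];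
    try (destruct j as [|[|[|[|j]]]]; [| | | |lia]; unfold next_state, next_mover in *; simpl in *).
  all: try (pose proof (Horder n); pose proof (Horder (S n)); rewrite ?Hmid).
  all: try lia; try lra.
  all: try (destruct k as [|[|[|[|k]]]]; simpl; first [lia | reflexivity | apply Hmid]).
  destruct (Hunb X) as [n Hn]. exists n. unfold breakpoint.
  rewrite <- (Nat.add_0_r (4 * n)), !periodic_states_eq by lia. simpl.
  pose proof (Horder n). lra.
Qed.

Lemma tableA_breakpoint n j : (j < 4)%nat ->
  breakpoint St (4 * n + j) = match j with 0%nat => lo n + mid n + hi n
    | 1%nat => lo n + lo (S n) + hi n | 2%nat => 2 * lo (S n) + hi n | _ => lo (S n) + 2 * hi n end.
Proof.
  intros Hj. unfold breakpoint, St. rewrite !periodic_states_eq by exact Hj.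
  destruct j as [|[|[|[|j]]]]; [| | | |lia]; simpl; ring.
Qed.

Lemma tableA_staircase : 0 < hi 0%nat ->
  staircase (interpolate St r 3) (fun n => lo n + mid n + hi n) hi.
Proof.
  intros Hhi0. pose proof tableA_sequence as HS.
  assert (Hnext : forall n, (S (4 * n + 3) = 4 * S n + 0)%nat) by (intros; lia).
  split; cbv beta.
  - pose proof (Horder 0%nat). lra.
  - intros n. rewrite Hmid. pose proof (Horder n). pose proof (Horder (S n)). lra.
  - intros X. destruct (Hunb X) as [n Hn]. exists n. pose proof (Horder n). lra.
  - intros n. apply Horder.
  - intros n. rewrite Hmid. pose proof (Horder n). pose proof (Horder (S n)). lra.
  - intros n q Hq. rewrite (interpolate_constant St r HS 3 (4 * n + 0) (4 * n + 3)).
    + unfold St. rewrite periodic_states_eq by lia. reflexivity.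
    + lia.
    + intros i Hi.
      assert (i = 4 * n + 0 \/ i = 4 * n + 1 \/ i = 4 * n + 2)%nat as [->|[->| ->]] by lia;
        unfold r; rewrite periodic_mover_eq by lia; discriminate.
    + rewrite !tableA_breakpoint by lia. rewrite Hmid in Hq. lra.
  - intros n q Hq.
    replace 3%nat with (r (4 * n + 3)%nat) at 1
      by (unfold r; rewrite periodic_mover_eq by lia; reflexivity).
    rewrite (interpolate_rising St r HS (4 * n + 3)).
    + unfold St, r. rewrite periodic_mover_eq, periodic_states_eq, tableA_breakpoint by lia.
      simpl. rewrite Hmid. lra.
    + rewrite Hnext, !tableA_breakpoint by lia. rewrite Hmid in *. lra.
Qed.

End FamilyA.

Definition loA (g u : nat -> R) (n : nat) : R :=
  match n with O => u O / 2 | S m => u m * growth g m end.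

Definition midA (g u : nat -> R) (n : nat) : R :=
  match n with O => u O / 2 | S m => growth g m end.

Section FamilyAMultipliers.

Variables (g u : nat -> R) (phi : R).
Hypotheses (Hg0 : 1 < g 0%nat) (Hgrow : Un_growing g) (Hu : forall n, 0 < u n < 1)
  (Hug : forall n, 1 < u (S n) * g n).

Let D := growth g.

Lemma g_ge_g0 n : g 0%nat <= g n.
Proof. apply Rge_le, growing_prop; [exact Hgrow | lia]. Qed.

Lemma growthA_pos n : 0 < D n.
Proof. exact (growth_pos g (g 0%nat) Hg0 g_ge_g0 n). Qed.

Lemma growthA_unbounded X : exists n, X < D n.
Proof. exact (growth_unbounded g (g 0%nat) Hg0 g_ge_g0 X). Qed.

Lemma familyA_order n : 0 <= loA g u n <= midA g u n /\ midA g u n < loA g u (S n) /\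
  loA g u (S n) < D n /\ D n < D (S n).
Proof.
  pose proof (growth_increasing g (g 0%nat) Hg0 g_ge_g0) as HDinc. fold D in HDinc.
  assert (HDS : forall n, D (S n) = D n * g n) by reflexivity.
  destruct n as [|m]; simpl; fold D.
  - pose proof (Hu 0%nat). pose proof (HDinc 0%nat). unfold D in *; simpl in *. lra.
  - rewrite <- HDS. pose proof (Hu m). pose proof (Hu (S m)). pose proof (Hug m).
    pose proof (growthA_pos m). pose proof (growthA_pos (S m)). pose proof (HDinc (S m)).
    rewrite HDS in *.
    repeat split; nra.
Qed.

Lemma familyA_step_ratio m :
  D (S m) / (loA g u (S m) + midA g u (S m) + D (S m)) = g m / (u m + 1 + g m).
Proof.
  change (loA g u (S m)) with (u m * D m). change (midA g u (S m)) with (D m).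
  change (D (S m)) with (D m * g m).
  pose proof (growthA_pos m). pose proof (Hu m). pose proof (g_ge_g0 m). field. split; nra.
Qed.

Lemma familyA_peaks :
  Un_growing (fun n => g n / (u n + 1 + g n)) -> Un_cv (fun n => g n / (u n + 1 + g n)) phi ->
  peaks_along (fun n => D n / (loA g u n + midA g u n + D n)) S phi.
Proof.
  intros Hv_grow Hphi. split; [intros j; lia|]. split; [intros j; lia|]. split.
  - intros [|m] Hm; [lia|]. rewrite familyA_step_ratio. exact (growing_ineq _ _ Hv_grow Hphi m).
  - exists 1. split; [lra|]. intros alpha Ha.
    destruct (growing_cv_threshold _ phi alpha Hv_grow Hphi ltac:(lra)) as [j0 Hj0].
    exists j0. intros [|m] Hm; [lia|]. rewrite familyA_step_ratio, Hj0. split.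
    + intros Hj. exists m. split; [exact Hj | reflexivity].
    + intros [j [Hj E]]. injection E as ->. exact Hj.
Qed.

Lemma familyA_kappa_ratio j :
  D (S j) / (loA g u (S (S j)) + midA g u (S (S j)) + D (S (S j)) - D (S (S j)) + D (S j))
  = / (u (S j) + 2).
Proof.
  change (loA g u (S (S j))) with (u (S j) * D (S j)). change (midA g u (S (S j))) with (D (S j)).
  pose proof (growthA_pos (S j)). pose proof (Hu (S j)). field. split; nra.
Qed.

End FamilyAMultipliers.

Theorem realizable_familyA (g u : nat -> R) (phi kap : R) :
  1 < g 0%nat -> Un_growing g -> (forall n, 0 < u n < 1) -> (forall n, 1 < u (S n) * g n) ->
  Un_growing (fun n => g n / (u n + 1 + g n)) -> Un_cv (fun n => g n / (u n + 1 + g n)) phi ->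
  Un_cv (fun j => / (u (S j) + 2)) kap ->
  realizable phi kap.
Proof.
  intros Hg0 Hgrow Hu Hug Hv_grow Hphi Hkap. set (D := growth g).
  pose proof (familyA_order g u Hg0 Hgrow Hu Hug) as Horder.
  pose proof (growthA_unbounded g Hg0 Hgrow) as Hunb.
  apply (realizable_of_staircase _ _ (fun n => loA g u n + midA g u n + D n) D S phi kap
           (tableA_sequence _ _ _ Horder (fun _ => eq_refl) Hunb)).
  - intros X. destruct (Hunb X) as [n Hn]. exists (4 * S n + 2)%nat.
    rewrite periodic_states_eq by lia. apply Rlt_trans with (D n); [exact Hn|].
    destruct (Horder (S n)) as [_ [H _]]. exact H.
  - exact (tableA_staircase _ _ _ Horder (fun _ => eq_refl) Hunb (growthA_pos g Hg0 Hgrow 0)).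
  - symmetry. exact (tableA_breakpoint _ _ _ 0 0 ltac:(lia)).
  - apply (Un_cv_bounds (fun n => g n / (u n + 1 + g n)) 0 1 phi); [|exact Hphi]. intros n.
    pose proof (Hu n). pose proof (g_ge_g0 g Hgrow n). split.
    + apply Rlt_le, Rdiv_lt_0_compat; lra.
    + apply div_le_iff; lra.
  - exact (familyA_peaks g u phi Hg0 Hgrow Hu Hv_grow Hphi).
  - eapply Un_cv_ext; [|exact Hkap]. intros j. symmetry.
    exact (familyA_kappa_ratio g u Hg0 Hgrow Hu j).
Qed.

Lemma cv_infty_INR_plus (c : R) : cv_infty (fun n => INR n + c).
Proof.
  intros X. destruct (INR_archimed 1 (X - c) ltac:(lra)) as [N HN].
  exists N. intros n Hn. pose proof (le_INR _ _ Hn). lra.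
Qed.

Lemma Un_cv_frac_one (x y : nat -> R) (b : R) : (forall n, 0 <= y n <= b) -> cv_infty x ->
  Un_cv (fun n => x n / (y n + x n)) 1.
Proof.
  intros Hy Hx eps Heps. destruct (Hx (b / eps + 1)) as [N HN].
  assert (Hb : 0 <= b) by (pose proof (Hy 0%nat); lra).
  assert (0 <= b / eps) by (apply Rmult_le_pos; [lra | apply Rlt_le, Rinv_0_lt_compat; lra]).
  exists N. intros n Hn. specialize (HN n Hn). specialize (Hy n). unfold Rdist.
  assert (E : x n / (y n + x n) - 1 = - (y n / (y n + x n))) by (field; lra).
  rewrite E, Rabs_Ropp, Rabs_pos_eq
    by (apply Rmult_le_pos; [lra | apply Rlt_le, Rinv_0_lt_compat; lra]).
  assert (b < eps * x n).
  { apply (Rmult_lt_compat_l eps) in HN; [|lra].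
    replace (eps * (b / eps + 1)) with (b + eps) in HN by (field; lra). lra. }
  apply Rle_lt_trans with (y n / x n).
  - apply Rmult_le_compat_l; [lra|]. apply Rinv_le_contravar; lra.
  - apply Rmult_lt_reg_r with (x n); [lra|]. unfold Rdiv. rewrite Rmult_assoc, Rinv_l; lra.
Qed.

Lemma Un_cv_div_plus (u : nat -> R) (s a c : R) : Un_cv u s -> s + c <> 0 ->
  Un_cv (fun n => a / (u n + c)) (a / (s + c)).
Proof.
  intros Hu Hs. apply (continuity_seq (fun x => a / (x + c))); [|exact Hu].
  apply continuity_pt_div; [apply continuity_pt_const; intros ? ?; reflexivity | | exact Hs].
  apply continuity_pt_plus; [apply derivable_continuous_pt, derivable_pt_id|].
  apply continuity_pt_const. intros ? ?. reflexivity.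
Qed.

Definition towards (s : R) (n : nat) : R := s + (1 - s) / (INR n + 2).

Section Towards.

Variable s : R.
Hypothesis Hs : 0 <= s < 1.

Lemma towards_bounds n : s < towards s n < 1.
Proof.
  unfold towards. pose proof (pos_INR n).
  assert (0 < (1 - s) / (INR n + 2)) by (apply Rdiv_lt_0_compat; lra).
  assert ((1 - s) / (INR n + 2) < 1 - s); [|lra].
  apply Rmult_lt_reg_r with (INR n + 2); [lra|].
  unfold Rdiv. rewrite Rmult_assoc, Rinv_l by lra. nra.
Qed.

Lemma towards_decreasing n : towards s (S n) <= towards s n.
Proof.
  unfold towards. rewrite S_INR. pose proof (pos_INR n).
  apply Rplus_le_compat_l, Rmult_le_compat_l; [lra|]. apply Rinv_le_contravar; lra.
Qed.

Lemma towards_cv : Un_cv (towards s) s.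
Proof.
  replace s with (s + (1 - s) * 0) at 2 by ring. unfold towards.
  apply CV_plus; [apply Un_cv_const|]. unfold Rdiv. apply CV_mult; [apply Un_cv_const|].
  apply cv_infty_cv_0, cv_infty_INR_plus.
Qed.

End Towards.

Lemma inv_minus_one_range (lh : R) : 1/2 < lh <= 1 -> 0 <= 1 / lh - 1 < 1.
Proof.
  intros Hlh. assert (1 <= 1 / lh < 2); [|lra].
  split; [apply le_div_iff; lra|]. apply Rmult_lt_reg_r with lh; [lra|].
  unfold Rdiv. rewrite Rmult_assoc, Rinv_l by lra. lra.
Qed.

Lemma realizable_gt_half (lh : R) (g : nat -> R) (phi : R) :
  1/2 < lh <= 1 -> 1 < g 0%nat -> Un_growing g ->
  (forall n, 1 < towards (1 / lh - 1) (S n) * g n) ->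
  Un_cv (fun n => g n / (towards (1 / lh - 1) n + 1 + g n)) phi ->
  realizable phi (lh / (1 + lh)).
Proof.
  intros Hlh Hg0 Hgrow Hug Hphi. pose proof (inv_minus_one_range lh Hlh) as Hs.
  set (s := 1 / lh - 1) in *.
  apply (realizable_familyA g (towards s)); try assumption.
  - intros n. pose proof (towards_bounds s Hs n). lra.
  - intros n. pose proof (towards_bounds s Hs n). pose proof (towards_bounds s Hs (S n)).
    pose proof (towards_decreasing s Hs n). pose proof (Hgrow n). pose proof (g_ge_g0 g Hgrow n).
    apply Rmult_le_reg_r with ((towards s n + 1 + g n) * (towards s (S n) + 1 + g (S n))); [nra|].
    field_simplify; [nra | lra | lra].
  - replace (lh / (1 + lh)) with (1 / (s + 2)) by (unfold s; field; lra).
    apply Un_cv_ext with (fun j => 1 / (towards s (j + 1) + 2)).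
    { intros j. rewrite Nat.add_1_r. unfold Rdiv. ring. }
    apply (CV_shift' (fun n => 1 / (towards s n + 2)) 1).
    apply Un_cv_div_plus; [apply towards_cv | lra].
Qed.

Lemma pow_root_between (X B : R) : 1 <= X -> 1 < B ->
  exists (k : nat) (h : R), 1 < h < B /\ h ^ k = X.
Proof.
  intros HX HB. destruct (Req_dec X 1) as [->|HX1].
  { exists 0%nat, ((1 + B) / 2). simpl. lra. }
  assert (lX : 0 < ln X) by (rewrite <- ln_1; apply ln_increasing; lra).
  assert (lB : 0 < ln B) by (rewrite <- ln_1; apply ln_increasing; lra).
  destruct (INR_archimed (ln B) (ln X) lB) as [k Hk].
  assert (Hk0 : 0 < INR k) by (destruct k; [simpl in Hk; lra | apply lt_0_INR; lia]).
  exists k, (exp (ln X / INR k)). split; [split|].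
  - rewrite <- exp_0. apply exp_increasing, Rdiv_lt_0_compat; lra.
  - rewrite <- (exp_ln B) by lra. apply exp_increasing.
    apply Rmult_lt_reg_r with (INR k); [exact Hk0|].
    unfold Rdiv. rewrite Rmult_assoc, Rinv_l by lra. lra.
  - rewrite <- Rpower_pow by apply exp_pos. unfold Rpower. rewrite ln_exp.
    replace (INR k * (ln X / INR k)) with (ln X) by (field; lra). apply exp_ln. lra.
Qed.

Lemma realizable_le_half (lh : R) (gm : nat -> R) (phi : R) :
  0 <= lh <= 1/2 -> 1 < gm 0%nat -> Un_growing gm ->
  Un_cv (fun n => gm n / (2 + gm n)) phi ->
  realizable phi (lh / (1 + lh)).
Proof.
  intros Hlh Hgm0 Hgrow Hphi. destruct (Req_dec lh 0) as [->|Hlh0].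
  - set (h := (1 + gm 0%nat) / 2).
    apply (realizable_familyB (fun j => j) gm h); [unfold h; lra | exact Hgrow | exact Hphi|].
    replace (0 / (1 + 0)) with 0 by field. apply cv_infty_cv_0.
    intros X. destruct (Pow_x_infinity h ltac:(rewrite Rabs_pos_eq; unfold h; lra) X) as [N HN].
    exists N. intros n Hn. specialize (HN n Hn).
    assert (0 <= h ^ n) by (apply pow_le; unfold h; lra).
    rewrite Rabs_pos_eq in HN by assumption. lra.
  - destruct (pow_root_between (/ (2 * lh)) (gm 0%nat)) as [k [h [Hh Hhk]]]; [|exact Hgm0|].
    { rewrite <- Rinv_1. apply Rinv_le_contravar; lra. }
    apply (realizable_familyB (fun _ => k) gm h); [lra | exact Hgrow | exact Hphi|].
    replace (lh / (1 + lh)) with (/ (2 * h ^ k + 1)) by (rewrite Hhk; field; lra).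
    apply Un_cv_const.
Qed.

Lemma realizable_gt_half_finite (lh l : R) : 1/2 < lh < 1 -> lh ^ 2 / (1 - lh) <= l ->
  realizable (l / (1 + l)) (lh / (1 + lh)).
Proof.
  intros Hlh Hl. pose proof (inv_minus_one_range lh ltac:(lra)) as Hs.
  set (s := 1 / lh - 1) in *. set (g := l / lh).
  assert (Hl' : lh * lh <= l * (1 - lh)).
  { apply div_le_iff in Hl; [|lra]. replace (lh ^ 2) with (lh * lh) in Hl by ring. exact Hl. }
  assert (Hll : lh < l) by nra.
  assert (Hg : 1 < g).
  { unfold g. apply Rmult_lt_reg_r with lh; [lra|].
    unfold Rdiv. rewrite Rmult_assoc, Rinv_l by lra. lra. }
  assert (Hsg : 1 <= s * g).
  { unfold s, g. replace ((1 / lh - 1) * (l / lh)) with (l * (1 - lh) / (lh * lh)) by (field; lra).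
    apply le_div_iff; nra. }
  apply (realizable_gt_half lh (fun _ => g)); [lra | exact Hg | intros n; cbv beta; lra | |].
  - intros n. fold s. pose proof (towards_bounds s Hs (S n)). nra.
  - fold s. replace (l / (1 + l)) with (g / (s + (1 + g))) by (unfold s, g; field; split; lra).
    apply Un_cv_ext with (fun n => g / (towards s n + (1 + g))).
    { intros n. cbv beta. f_equal. ring. }
    apply Un_cv_div_plus; [apply towards_cv; exact Hs | lra].
Qed.

Lemma realizable_gt_half_infinite (lh : R) : 1/2 < lh <= 1 -> realizable 1 (lh / (1 + lh)).
Proof.
  intros Hlh. pose proof (inv_minus_one_range lh Hlh) as Hs. set (s := 1 / lh - 1) in *.
  apply (realizable_gt_half lh (fun n => INR n + 4));
    [lra | simpl; lra | intros n; rewrite S_INR; lra | |].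
  - intros n. fold s. unfold towards. rewrite S_INR. pose proof (pos_INR n).
    replace ((s + (1 - s) / (INR n + 1 + 2)) * (INR n + 4))
      with (s * (INR n + 3) + 1 + (1 - s) / (INR n + 3)) by (field; lra).
    assert (0 < (1 - s) / (INR n + 3)) by (apply Rdiv_lt_0_compat; lra). nra.
  - fold s. apply (Un_cv_frac_one (fun n => INR n + 4) (fun n => towards s n + 1) 2);
      [|apply cv_infty_INR_plus].
    intros n. pose proof (towards_bounds s Hs n). lra.
Qed.

Theorem mainTheorem10 (lh : R) (lam : option R) :
  0 <= lh <= 1 -> lam_hyp lh lam ->
  exists (q0 : R) (P : nat -> R -> R),
    0 <= q0 /\ is_3system q0 P /\
    (forall M, exists N, forall q, N <= q -> M < P 1%nat q) /\
    phibar_is (P 3%nat) (lam_frac lam) /\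
    kappa_is q0 (P 3%nat) (lh / (1 + lh)).
Proof.
  intros Hlh Hhyp. change (realizable (lam_frac lam) (lh / (1 + lh))).
  destruct (Rle_or_lt lh (1/2)) as [Hsmall|Hlarge]; destruct lam as [l|]; simpl in *.
  - apply (realizable_le_half lh (fun _ => 2 * l)); [lra | lra | intros n; lra |].
    replace (l / (1 + l)) with (2 * l / (2 + 2 * l)) by (field; lra). apply Un_cv_const.
  - apply (realizable_le_half lh (fun n => INR n + 3));
      [lra | simpl; lra | intros n; rewrite S_INR; lra |].
    apply (Un_cv_frac_one _ (fun _ => 2) 2); [intros; lra | apply cv_infty_INR_plus].
  - apply realizable_gt_half_finite; lra.
  - apply realizable_gt_half_infinite. lra.
Qed.
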